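(* Let $\Delta$ be a simplicial polytopal fan in $\mathbb{R}^d$ with ray generators $\mathbf{v}_1,\ldots,\mathbf{v}_n$. Let $\mathbf{u}^{(1)},\mathbf{u}^{(2)},\ldots\in\mathbb{S}^{d-1}$ be a sequence of directions for which there exist $0\le t<1/2$, $\delta>0$ and $N\in\mathbb{N}$ such that \[ |\{\mathbf{u}^{(1)},\ldots,\mathbf{u}^{(m)}\}\cap C_t(i)|\ge m(2.5nt+\delta) \] for all $m\ge N$ and all $1\le i\le n$. Then, with $U=(\mathbf{u}^{(1)},\ldots,\mathbf{u}^{(m)})^\mathsf{T}$, \[ \lambda_1(A_U^\mathsf{T}A_U)\ge\frac{m\delta}{\max_{1\le i\le n}\|\mathbf{v}_i\|^2} \] for all $m\ge N$.
   Context: A fan is simplicial if every cone is generated by linearly independent vectors; polytopal if it is the normal fan of a polytope. For $\mathbf{u}\in\mathbb{R}^d$, with $\sigma$ the cone of $\Delta$ containing $\mathbf{u}$ in its relative interior and $\mathbf{u}=\sum_{k\in I_\sigma}\lambda_k\mathbf{v}_k$ over the generators of $\sigma$, set $[\mathbf{u}]_i=\lambda_i$ for $i\in I_\sigma$ and $0$ otherwise; $A_U$ is the $m\times n$ matrix with rows $[\mathbf{u}^{(i)}]^\mathsf{T}$. $W$ is the $n\times n$ diagonal matrix with diagonal entries $\|\mathbf{v}_1\|,\ldots,\|\mathbf{v}_n\|$, and $C_t(j)=\{\mathbf{x}\in\mathbb{R}^d\colon\|[\mathbf{x}]^\mathsf{T}W-\mathbf{e}_j\|_\infty\le t\}$.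 $\lambda_1(A)$ denotes the smallest eigenvalue of a symmetric matrix $A$. *)

From HB Require Import structures.
From mathcomp Require Import all_boot all_order all_algebra.
From mathcomp Require Import boolp classical_sets reals.
Set Implicit Arguments. Unset Strict Implicit. Unset Printing Implicit Defensive.
Import Order.TTheory GRing.Theory Num.Theory.
Local Open Scope ring_scope.
Local Open Scope classical_set_scope.

Section FanDefs.
Variables (R : realType) (d n : nat).

Definition dotv (x y : 'rV[R]_d) : R := \sum_(k < d) x 0 k * y 0 k.
Definition vnorm (x : 'rV[R]_d) : R := Num.sqrt (dotv x x).

Definition gen_cone (v : 'I_n -> 'rV[R]_d) (S : {set 'I_n}) : set 'rV[R]_d :=
  [set x | exists lam : 'I_n -> R,
     (forall i, 0 <= lam i) /\ (forall i, i \notin S -> lam i = 0) /\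
     x = \sum_(i < n) lam i *: v i].

Definition lin_indep (v : 'I_n -> 'rV[R]_d) (S : {set 'I_n}) : Prop :=
  forall lam : 'I_n -> R, \sum_(i in S) lam i *: v i = 0 -> forall i, i \in S -> lam i = 0.

(* Delta (a family of index sets, cone S = gen_cone v S) is a simplicial fan
   in R^d whose ray generators are exactly v_1, ..., v_n. *)
Definition simplicial_fan (v : 'I_n -> 'rV[R]_d) (Delta : {set {set 'I_n}}) : Prop :=
  [/\ (forall i, v i != 0),
      (forall i, [set i]%SET \in Delta),
      (forall S T : {set 'I_n}, S \in Delta -> T \subset S -> T \in Delta),
      (forall S T : {set 'I_n}, S \in Delta -> T \in Delta ->
          gen_cone v S `&` gen_cone v T = gen_cone v (S :&: T))
    & (forall S : {set 'I_n}, S \in Delta -> lin_indep v S)].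

(* Normal cone of the face of P = conv(p_1..p_k) on which c is maximised. *)
Definition normal_cone (k : nat) (p : 'I_k -> 'rV[R]_d) (c : 'rV[R]_d) : set 'rV[R]_d :=
  [set y | forall j, (forall l, dotv c (p l) <= dotv c (p j)) ->
                     forall l, dotv y (p l) <= dotv y (p j)].

Definition polytopal (v : 'I_n -> 'rV[R]_d) (Delta : {set {set 'I_n}}) : Prop :=
  exists k (p : 'I_k -> 'rV[R]_d), (0 < k)%N /\
    (forall S : {set 'I_n}, S \in Delta -> exists c, gen_cone v S = normal_cone p c) /\
    (forall c, exists S : {set 'I_n}, S \in Delta /\ gen_cone v S = normal_cone p c).

(* lam is the coordinate vector [x]: x lies in the relative interior of the
   cone sigma_S, S in Delta, and x = sum_{k in S} lam_k v_k. *)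
Definition is_fancoord (v : 'I_n -> 'rV[R]_d) (Delta : {set {set 'I_n}})
  (x : 'rV[R]_d) (lam : 'rV[R]_n) : Prop :=
  exists S : {set 'I_n}, [/\ S \in Delta, (forall i, i \notin S -> lam 0 i = 0),
               (forall i, i \in S -> 0 < lam 0 i) & x = \sum_(i < n) lam 0 i *: v i].

(* [x] (well defined: unique for a simplicial fan; complete fans cover R^d). *)
Definition fancoord (v : 'I_n -> 'rV[R]_d) (Delta : {set {set 'I_n}})
  (x : 'rV[R]_d) : 'rV[R]_n := xget 0 [set lam | is_fancoord v Delta x lam].

(* A_U : rows [u^(1)]^T, ..., [u^(m)]^T  (u^(i) = u i, i >= 1). *)
Definition A_U (v : 'I_n -> 'rV[R]_d) (Delta : {set {set 'I_n}})
  (u : nat -> 'rV[R]_d) (m : nat) : 'M[R]_(m, n) :=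
  \matrix_(i < m, k < n) fancoord v Delta (u i.+1) 0 k.

Definition C_t (v : 'I_n -> 'rV[R]_d) (Delta : {set {set 'I_n}})
  (t : R) (j : 'I_n) : set 'rV[R]_d :=
  [set x | forall i : 'I_n,
     `|fancoord v Delta x 0 i * vnorm (v i) - (i == j)%:R| <= t].

Definition count_in (u : nat -> 'rV[R]_d) (m : nat) (C : set 'rV[R]_d) : nat :=
  size (undup [seq u k | k <- iota 1 m & `[< C (u k) >]]).

End FanDefs.

Definition lambda1 (R : realType) (k : nat) (M : 'M[R]_k) : R :=
  inf [set a : R | eigenvalue M a].

From HB Require Import structures.
From mathcomp Require Import all_boot all_order all_algebra.
From mathcomp Require Import boolp classical_sets reals.
From mathcomp Require Import ring lra complex.
Import Order.TTheory GRing.Theory Num.Theory.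
Set Implicit Arguments. Unset Strict Implicit. Unset Printing Implicit Defensive.
Local Open Scope ring_scope.
Local Open Scope classical_set_scope.

(* For a row vector x, x A_U^T A_U x^T = sum_k ([u^(k)] . x)^2.  Put w_j = ||v_j||
   and z_j = x_j / w_j, so that [u^(k)] . x = r_k . z with r_k = [u^(k)]^T W.  If
   u^(k) lies in C_t(i), then r_k is within t of e_i in sup-norm, hence
   r_k . z = z_i + e with |e| <= t ||z||_1 <= t sqrt n ||z||, and
   (r_k . z)^2 >= (1 - t) (z_i^2 - t n ||z||^2).  As t < 1/2, no u^(k) lies in two
   of the C_t(i).  Summing over k and using the count hypothesis (which also forces
   delta <= 1 - 5/2 n t) gives x A_U^T A_U x^T >= m delta ||z||^2
   >= m delta ||x||^2 / max_i ||v_i||^2.  This Rayleigh bound holds at every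
   eigenvector, and eigenvalues exist because a complex eigenvalue of a real Gram
   matrix is a nonnegative Rayleigh quotient, hence real. *)

Lemma sqr_sum_norm_le (R : realFieldType) n (z : 'I_n -> R) :
  (\sum_j `|z j|) ^+ 2 <= n%:R * \sum_j z j ^+ 2.
Proof.
have amgm (a b : R) : `|a| * `|b| <= (a ^+ 2 + b ^+ 2) / 2.
  rewrite -[a ^+ 2]real_normK ?num_real // -[b ^+ 2]real_normK ?num_real //.
  have := sqr_ge0 (`|a| - `|b|); lra.
rewrite expr2 mulr_suml.
apply: le_trans (_ : \sum_i \sum_j (z i ^+ 2 + z j ^+ 2) / 2 <= _).
  by apply: ler_sum => i _; rewrite mulr_sumr; apply: ler_sum => j _.
under eq_bigr do rewrite -mulr_suml big_split /= sumr_const card_ord.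
rewrite -mulr_suml big_split /= sumr_const card_ord.
rewrite sumrMnl -[_ *+ n]mulr_natl; lra.
Qed.

Lemma sqrD_ge (R : realFieldType) (a e t K : R) :
  0 <= t -> t < 1 -> e ^+ 2 <= t ^+ 2 * K -> (1 - t) * (a ^+ 2 - t * K) <= (a + e) ^+ 2.
Proof.
move=> t_ge0 t_lt1 e_le; have [t0|t_neq0] := eqVneq t 0.
  have e0 : e = 0.
    by apply/eqP; rewrite -sqrf_eq0 eq_le sqr_ge0 andbT; move: e_le; rewrite t0 expr0n mul0r.
  by rewrite t0 e0; lra.
have t_gt0 : 0 < t by rewrite lt_def t_neq0.
(* t (a + e)^2 = t (1 - t) a^2 - (1 - t) e^2 + (t a + e)^2 *)
rewrite -(ler_pM2l t_gt0).
have := sqr_ge0 (t * a + e); nra.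
Qed.

Section NearUnit.
Variables (R : realFieldType) (n : nat) (t : R).

Definition near_unit (r : 'I_n -> R) (i : 'I_n) : bool :=
  [forall j, `|r j - (j == i)%:R| <= t].

Lemma near_unit_uniq r i j : t < 1 / 2 -> near_unit r i -> near_unit r j -> i = j.
Proof.
move=> t_lt_half /forallP/(_ i) ri /forallP/(_ i) rj; apply/eqP/negPn/negP => ij.
move: ri rj; rewrite eqxx (negbTE ij) /= subr0 -normrN opprB => r1 r0.
have := ler_normD (1 - r i) (r i); rewrite subrK normr1; lra.
Qed.

Lemma near_unit_dot_sqr_ge r i (z : 'I_n -> R) :
  0 <= t -> t < 1 -> near_unit r i ->
  (1 - t) * (z i ^+ 2 - t * (n%:R * \sum_j z j ^+ 2)) <= (\sum_j r j * z j) ^+ 2.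
Proof.
move=> t_ge0 t_lt1 /forallP r_near.
set e := \sum_j (r j - (j == i)%:R) * z j.
have -> : \sum_j r j * z j = z i + e.
  rewrite /e [z i](_ : _ = \sum_j (j == i)%:R * z j) -?big_split /=.
    by apply: eq_bigr => j _; ring.
  by rewrite (bigD1 i) //= eqxx mul1r big1 ?addr0 // => j /negbTE->; rewrite mul0r.
apply: sqrD_ge => //.
have e_le : `|e| <= t * \sum_j `|z j|.
  rewrite mulr_sumr; apply: le_trans (ler_norm_sum _ _ _) _.
  by apply: ler_sum => j _; rewrite normrM ler_wpM2r.
apply: le_trans (_ : (t * \sum_j `|z j|) ^+ 2 <= _).
  by rewrite -real_normK ?num_real // ler_sqr ?nnegrE // (le_trans _ e_le).
by rewrite exprMn ler_wpM2l ?sqr_ge0 ?sqr_sum_norm_le.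
Qed.

Lemma dot_sqr_ge_sum_near_unit r (z : 'I_n -> R) : 0 <= t -> t < 1 / 2 ->
  (1 - t) * (\sum_i (near_unit r i)%:R * z i ^+ 2 - t * (n%:R * \sum_j z j ^+ 2))
    <= (\sum_j r j * z j) ^+ 2.
Proof.
move=> t_ge0 t_lt_half; case: (pickP (near_unit r)) => [i ri | no_near].
  rewrite (bigD1 i) //= ri mul1r big1 ?addr0; first by apply: near_unit_dot_sqr_ge => //; lra.
  move=> j ji; rewrite (_ : near_unit r j = false) ?mul0r //.
  by apply: contraNF ji => rj; apply/eqP; exact: near_unit_uniq rj ri.
rewrite big1 => [|i _]; last by rewrite no_near mul0r.
apply: le_trans (sqr_ge0 _); rewrite sub0r mulrN oppr_le0 mulr_ge0 ?mulr_ge0 ?sumr_ge0 //.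
- lra.
- by move=> j _; rewrite sqr_ge0.
Qed.

Lemma near_unit_rows_sqr_ge m (r : 'I_m -> 'I_n -> R) (delta : R) :
  0 <= t -> t < 1 / 2 ->
  (forall i, m%:R * (5 / 2 * n%:R * t + delta) <= \sum_k (near_unit (r k) i)%:R) ->
  forall z : 'I_n -> R, m%:R * delta * \sum_j z j ^+ 2 <= \sum_k (\sum_j r k j * z j) ^+ 2.
Proof.
move=> t_ge0 t_lt_half near_count z; set Z := \sum_j z j ^+ 2.
have Z_ge0 : 0 <= Z by apply: sumr_ge0 => j _; exact: sqr_ge0.
have [n0|n_gt0] := posnP n.
  rewrite /Z big1 ?mulr0 => [|j _]; last by have := ltn_ord j; rewrite {2}n0.
  by apply: sumr_ge0 => k _; exact: sqr_ge0.
pose c i := \sum_k (near_unit (r k) i)%:R : R.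
have c_le_m i : c i <= m%:R.
  rewrite -[m]card_ord -sumr_const; apply: ler_sum => k _.
  by rewrite -[1]/(1%:R) ler_nat leq_b1.
have delta_le : m%:R * delta <= m%:R * (1 - 5 / 2 * n%:R * t).
  have := le_trans (near_count (Ordinal n_gt0)) (c_le_m _); lra.
have sum_rows : (1 - t) * (\sum_i c i * z i ^+ 2 - m%:R * (t * (n%:R * Z)))
    <= \sum_k (\sum_j r k j * z j) ^+ 2.
  apply: le_trans (ler_sum _ (fun k _ => dot_sqr_ge_sum_near_unit (r k) z t_ge0 t_lt_half)).
  have -> : \sum_i c i * z i ^+ 2 = \sum_k \sum_i (near_unit (r k) i)%:R * z i ^+ 2.
    by rewrite exchange_big; apply: eq_bigr => i _; rewrite mulr_suml.
  by rewrite -mulr_sumr sumrB sumr_const card_ord mulr_natl.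
have count_sum : m%:R * (5 / 2 * n%:R * t + delta) * Z <= \sum_i c i * z i ^+ 2.
  by rewrite /Z mulr_sumr; apply: ler_sum => i _; rewrite ler_wpM2r ?sqr_ge0 ?near_count.
have n_ge1 : 1 <= n%:R :> R by rewrite ler1n.
have gap_ge0 : 0 <= m%:R * (3 / 2 * n%:R * (1 - t)) - m%:R * delta.
  have : 0 <= m%:R * (3 / 2 * n%:R + n%:R * t - 1).
    by rewrite mulr_ge0 //; have := mulr_ge0 (ler0n R n) t_ge0; lra.
  lra.
have : (1 - t) * (m%:R * (5 / 2 * n%:R * t + delta) * Z - m%:R * (t * (n%:R * Z)))
    <= (1 - t) * (\sum_i c i * z i ^+ 2 - m%:R * (t * (n%:R * Z))).
  by rewrite ler_wpM2l ?lerB //; lra.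
(* (1 - t) (m (5/2 n t + delta) - m t n) Z - m delta Z = t Z (m 3/2 n (1 - t) - m delta) *)
have := mulr_ge0 (mulr_ge0 t_ge0 Z_ge0) gap_ge0.
lra.
Qed.

End NearUnit.

Lemma sum_sqr_row_gt0 (R : realDomainType) n (x : 'rV[R]_n) :
  x != 0 -> 0 < \sum_j x 0 j ^+ 2.
Proof.
move=> x_neq0; rewrite lt_def sumr_ge0 ?andbT => [|j _]; last exact: sqr_ge0.
apply: contra x_neq0 => /eqP/psumr_eq0P sum0; apply/eqP/rowP => j.
by apply/eqP; rewrite mxE -sqrf_eq0 sum0 // => i _; exact: sqr_ge0.
Qed.

Lemma gram_quadE (R : comNzRingType) m n (A : 'M[R]_(m, n)) (x : 'rV_n) :
  (x *m (A^T *m A) *m x^T) 0 0 = \sum_k (x *m A^T) 0 k ^+ 2.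
Proof.
rewrite mulmxA -mulmxA -[A *m x^T]trmxK trmx_mul trmxK mxE.
by apply: eq_bigr => k _; rewrite [_^T k 0]mxE expr2.
Qed.

Lemma eigenvalue_ge_of_quad (R : realFieldType) n (M : 'M[R]_n) c a :
  (forall x : 'rV_n, c * \sum_j x 0 j ^+ 2 <= (x *m M *m x^T) 0 0) ->
  eigenvalue M a -> c <= a.
Proof.
move=> quad /eigenvalueP[x x_eigen x_neq0].
have := quad x; rewrite x_eigen -scalemxAl mxE.
have -> : (x *m x^T) 0 0 = \sum_j x 0 j ^+ 2.
  by rewrite mxE; apply: eq_bigr => j _; rewrite mxE expr2.
by rewrite ler_pM2r ?sum_sqr_row_gt0.
Qed.

Lemma gram_eigenvalue_ge0 (C : numClosedFieldType) m n (B : 'M[C]_(m, n)) a :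
  B \is a realmx -> eigenvalue (B^T *m B) a -> 0 <= a.
Proof.
move=> B_real /eigenvalueP[x x_eigen x_neq0].
have rayleigh : dotmx (x *m B^T) (x *m B^T) = a * dotmx x x.
  rewrite !dotmxE -mulmxA trmx_mul trmxK map_mxM (realmxC B_real).
  by rewrite (mulmxA B^T) mulmxA x_eigen -scalemxAl mxE.
have x_dnorm_gt0 : 0 < dotmx x x by rewrite dnorm_gt0.
by rewrite -(pmulr_lge0 _ x_dnorm_gt0) -rayleigh dnorm_ge0.
Qed.

Lemma exists_eigenvalue_gram (R : rcfType) m n (A : 'M[R]_(m, n)) :
  (0 < n)%N -> exists a, eigenvalue (A^T *m A) a.
Proof.
move=> n_gt0; pose B := map_mx (real_complex R) A.
have [a a_eigen] := eigenvalue_closed (B^T *m B) n_gt0.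
have B_real : B \is a realmx.
  apply/mxOverP => i j; rewrite mxE realE ler0c -(rmorph0 (real_complex R)) lecR.
  exact: num_real.
have /ger0_Im a_Im0 := gram_eigenvalue_ge0 B_real a_eigen.
exists (complex.Re a); rewrite -(eigenvalue_map (real_complex R)) map_mxM -map_trmx.
by case: a a_eigen a_Im0 => re im /= + im0; rewrite im0.
Qed.

Lemma gram_quad_ge (R : realFieldType) m n (A : 'M[R]_(m, n)) (w : 'I_n -> R)
    (M t delta : R) :
  (forall j, 0 < w j) -> (forall j, w j ^+ 2 <= M) ->
  0 <= t -> t < 1 / 2 -> 0 <= delta ->
  (forall i, m%:R * (5 / 2 * n%:R * t + delta)
               <= \sum_k (near_unit t (fun j => A k j * w j) i)%:R) ->
  forall x : 'rV_n, m%:R * delta / M * \sum_j x 0 j ^+ 2 <= (x *m (A^T *m A) *m x^T) 0 0.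
Proof.
move=> w_gt0 w_le t_ge0 t_lt_half delta_ge0 near_count x.
pose z j := x 0 j / w j.
have row_dot k : (x *m A^T) 0 k = \sum_j A k j * w j * z j.
  rewrite mxE; apply: eq_bigr => j _; rewrite mxE /z mulrC -mulrA.
  by rewrite [w j * _]mulrC divfK ?gt_eqF.
have z_sum : \sum_j x 0 j ^+ 2 / M <= \sum_j z j ^+ 2.
  apply: ler_sum => j _; rewrite /z expr_div_n ler_wpM2l ?sqr_ge0 //.
  by rewrite lef_pV2 ?posrE ?exprn_gt0 ?w_le // (lt_le_trans _ (w_le j)) ?exprn_gt0.
rewrite gram_quadE (eq_bigr (fun k => (\sum_j A k j * w j * z j) ^+ 2)) => [|k _];
  last by rewrite row_dot.
apply: le_trans (near_unit_rows_sqr_ge t_ge0 t_lt_half near_count z).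
by rewrite -mulrA ler_wpM2l ?mulr_ge0 // mulrC mulr_suml.
Qed.

Lemma le_lambda1 (R : realType) k (M : 'M[R]_k) c :
  (exists a, eigenvalue M a) -> (forall a, eigenvalue M a -> c <= a) -> c <= lambda1 M.
Proof. by move=> [a Ma] lb; apply: lb_le_inf => [|b /lb]; first by exists a. Qed.

Lemma lambda1_0 (R : realType) (M : 'M[R]_0) : lambda1 M = 0.
Proof.
rewrite /lambda1 (_ : [set a | eigenvalue M a] = set0) ?inf0 //.
by apply/seteqP; split => // a /eigenvalueP[x _]; rewrite thinmx0 eqxx.
Qed.

Lemma vnorm_gt0 (R : realType) d (x : 'rV[R]_d) : x != 0 -> 0 < vnorm x.
Proof.
move=> x_neq0; rewrite sqrtr_gt0 /dotv.
by under eq_bigr do rewrite -expr2; exact: sum_sqr_row_gt0.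
Qed.

Lemma count_in_le (R : realType) d (u : nat -> 'rV[R]_d) m (C : set 'rV[R]_d) :
  ((count_in u m C)%:R : R) <= \sum_(k < m) (`[< C (u k.+1) >])%:R.
Proof.
rewrite -natr_sum ler_nat (leq_trans (size_undup _)) // size_map size_filter.
rewrite -sum1_count big_mkcond /= -[1%N]/(1 + 0)%N iotaDl big_map.
rewrite -{1}[m]subn0 -/(index_iota 0 m) big_mkord.
by apply: eq_leq; apply: eq_bigr => k _; case: ifP.
Qed.

Lemma C_t_near_unit (R : realType) d n (v : 'I_n -> 'rV[R]_d) Delta u m t i (k : 'I_m) :
  `[< C_t v Delta t i (u k.+1) >] =
    near_unit t (fun j => A_U v Delta u m k j * vnorm (v j)) i.
Proof.
apply/asboolP/forallP => [near j | near j]; first by rewrite mxE; exact: near.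
by have := near j; rewrite mxE.
Qed.

Theorem lemma4p8 (R : realType) (d n : nat) (v : 'I_n -> 'rV[R]_d)
  (Delta : {set {set 'I_n}})
  (hfan : simplicial_fan v Delta) (hpoly : polytopal v Delta)
  (u : nat -> 'rV[R]_d) (hu : forall k, (0 < k)%N -> vnorm (u k) = 1)
  (t delta : R) (N : nat)
  (ht0 : 0 <= t) (ht : t < 1 / 2) (hdelta : 0 < delta)
  (hcount : forall m, (N <= m)%N -> forall i : 'I_n,
     m%:R * (5 / 2 * n%:R * t + delta) <= (count_in u m (C_t v Delta t i))%:R) :
  forall m, (N <= m)%N ->
    lambda1 ((A_U v Delta u m)^T *m A_U v Delta u m) >=
      m%:R * delta / \big[Num.max/0]_(i < n) vnorm (v i) ^+ 2.
Proof.
move=> m Nm; have [n0|n_gt0] := posnP n.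
  (* both sides are junk zeros: inf of the empty set, and division by 0 *)
  by subst n; rewrite lambda1_0 big_ord0 invr0 mulr0.
have [v_neq0 _ _ _ _] := hfan.
apply: le_lambda1; first exact: exists_eigenvalue_gram.
move=> a; apply: eigenvalue_ge_of_quad.
apply: (gram_quad_ge (w := fun j => vnorm (v j))) ht0 ht (ltW hdelta) _ => [j|j|i].
- exact: vnorm_gt0.
- exact: le_bigmax.
apply: le_trans (hcount m Nm i) (le_trans (count_in_le u m _) _).
by under eq_bigr => k _ do rewrite C_t_near_unit.
Qed.
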